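(* Let $c\in\mathbb{F}$ and let $V=V_{\mathrm{Vir}}(c,0)=\bigoplus_{n\ge0}V_n$ be the Virasoro vertex algebra with its grading and $\mathcal{H}$-action (described in the context). Then $L_1^{(n)}V_n=0$ for all $n\ge1$.
   Context: $\mathbb{F}$ is an algebraically closed field of odd prime characteristic $p$. $\mathcal{H}$: let $\mathfrak{sl}_2$ over $\mathbb{C}$ have basis $L_{-1},L_0,L_1$ with $[L_1,L_{-1}]=2L_0$, $[L_0,L_{\pm1}]=\mp L_{\pm1}$; put $L_{\pm1}^{(n)}=L_{\pm1}^n/n!$, $L_0^{(n)}=\binom{-2L_0}{n}$ in $U(\mathfrak{sl}_2)$; $U(\mathfrak{sl}_2)_{\mathbb{Z}}$ is the $\mathbb{Z}$-span of the $L_{-1}^{(i)}L_0^{(j)}L_1^{(k)}$, and $\mathcal{H}=\mathbb{F}\otimes_{\mathbb{Z}}U(\mathfrak{sl}_2)_{\mathbb{Z}}$ (Hopf algebra with $\Delta(L_{\pm1}^{(n)})=\sum_iL_{\pm1}^{(n-i)}\otimes L_{\pm1}^{(i)}$, $\Delta(L_0^{(n)})=\sum_iL_0^{(n-i)}\otimes L_0^{(i)}$, $\varepsilon=\delta_{n,0}$). Virasoro setting: $\mathrm{Vir}$ over $\mathbb{F}$ has basis $\{L_n\}_{n\in\mathbb{Z}}\cup\{\mathbf{c}\}$ with $[L_m,L_n]=(m-n)L_{m+n}+\frac12\binom{m+1}{3}\delta_{m+n,0}\mathbf{c}$, $\mathbf{c}$ central. It is an $\mathcal{H}$-module Lie algebra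 via $L_{\pm1}^{(r)}\mathbf{c}=L_0^{(r)}\mathbf{c}=\delta_{r,0}\mathbf{c}$, $L_{-1}^{(r)}(L_n)=(-1)^r\binom{n+1}{r}L_{n-r}$, $L_1^{(r)}(L_n)=\binom{-n+1}{r}L_{n+r}$, $L_0^{(r)}(L_n)=\binom{2n}{r}L_n$, extended to make $U(\mathrm{Vir})$ an $\mathcal{H}$-module algebra ($b(xy)=\sum(b^{(1)}x)(b^{(2)}y)$, where $\Delta(b)=\sum b^{(1)}\otimes b^{(2)}$). $V_{\mathrm{Vir}}(c,0)=U(\mathrm{Vir})/J_c$, where $J_c$ is the left ideal generated by $\mathbf{c}-c$ and $L_n$ ($n\ge-1$); $J_c$ is an $\mathcal{H}$-submodule, giving the $\mathcal{H}$-action on $V_{\mathrm{Vir}}(c,0)$. The grading is $\deg\mathbf{1}=0$, $\deg L_n=-n$, so $V_n$ is spanned by $L_{-s_1}\cdots L_{-s_r}\mathbf{1}$ with $s_i\ge2$, $\sum s_i=n$, where $\mathbf{1}=1+J_c$. *)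

From HB Require Import structures.
From mathcomp Require Import all_boot all_order all_algebra.
Set Implicit Arguments. Unset Strict Implicit. Unset Printing Implicit Defensive.
Import Order.TTheory GRing.Theory Num.Theory.
Local Open Scope ring_scope.

Section Vir.
Variable F : fieldType.

(* Generalized binomial coefficient binom(a, j) for a : int, as element of F:
   binom(a,j) = a(a-1)...(a-j+1)/j!.  For a = -(k+1) this equals
   (-1)^j * binom(k+j, j). *)
Definition binomz (a : int) (j : nat) : F :=
  match a with
  | Posz k => ('C(k, j))%:R
  | Negz k => (-1) ^+ j * ('C(k + j, j))%:R
  end.

(* A word [:: m1; ...; mk] stands for the monomial L_{m1} ... L_{mk}
   (in U(Vir), with c already replaced by the scalar c).
   A formal sum is a finite list of (coefficient, word) pairs. *)
Definition fsum := seq (F * seq int).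

Definition fcoef (x : fsum) (w : seq int) : F :=
  \sum_(pr <- x | pr.2 == w) pr.1.

(* Generators of the kernel of  T(span L_n) -> V_Vir(c,0):
   - commutator relations  u (L_m L_n - L_n L_m - [L_m,L_n]) w
     (with central term (1/2) binom(m+1,3) delta_{m+n,0} c);
   - left ideal generators  u L_m  for m >= -1. *)
Definition comm_rel (c : F) (u : seq int) (m n : int) (w : seq int) : fsum :=
  [:: (1, u ++ m :: n :: w);
      (-1, u ++ n :: m :: w);
      (- (m - n)%:~R, u ++ (m + n) :: w);
      (- (2%:R^-1 * binomz (m + 1) 3 * (m + n == 0)%:R * c), u ++ w)].

Definition ann_rel (u : seq int) (m : int) : fsum := [:: (1, rcons u m)].

Definition is_gen (c : F) (y : fsum) : Prop :=
  (exists u m n w, y = comm_rel c u m n w) \/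
  (exists u (m : int), -1 <= m /\ y = ann_rel u m).

(* x represents 0 in V_Vir(c,0) = U(Vir)/J_c: x is an F-linear combination
   of generators of the kernel. *)
Definition inJ (c : F) (x : fsum) : Prop :=
  exists gs : seq (F * fsum),
    (forall g, g \in gs -> is_gen c g.2) /\
    forall w, fcoef x w = \sum_(g <- gs) g.1 * fcoef g.2 w.

(* x is a representative of an element of V_n: a linear combination of
   L_{-s_1} ... L_{-s_r} 1 with all s_i >= 2 and sum s_i = n. *)
Definition in_Vn (n : nat) (x : fsum) : Prop :=
  forall pr, pr \in x ->
    all (fun m : int => m <= -2) pr.2 /\ \sum_(m <- pr.2) (- m) = n%:Z.

(* L_1^{(r)} applied to the monomial L_{m1}...L_{mk} (then to 1) via the
   iterated coproduct: sum over j_1+...+j_k = r of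
   prod_i binom(-m_i+1, j_i) L_{m_1+j_1} ... L_{m_k+j_k} 1,
   using L_1^{(j)} L_m = binom(-m+1, j) L_{m+j} and L_1^{(j)} 1 = delta_{j,0} 1. *)
Fixpoint actw (r : nat) (w : seq int) : fsum :=
  match w with
  | [::] => if r == 0%N then [:: (1, [::])] else [::]
  | m :: w' =>
      flatten [seq [seq (binomz (1 - m) j * q.1, (m + j%:Z) :: q.2)
                   | q <- actw (r - j)%N w'] | j <- iota 0 r.+1]
  end.

Definition L1div (r : nat) (x : fsum) : fsum :=
  flatten [seq [seq (pr.1 * q.1, q.2) | q <- actw r pr.2] | pr <- x].

End Vir.

(* Applying L_1^(n) to L_{-s_1} ... L_{-s_r} 1 in V_n lands in weight 0; expanding with
   the coproduct, L_1^(j) turns the first letter into binom(s_1+1, j) L_{j-s_1} and the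
   remaining letters into a vector of weight j - s_1.  A word of negative weight or of
   weight 1 is zero in V: commuting a letter L_m with m >= -1 to the right preserves the
   weight and otherwise produces only shorter words, and at the end L_m annihilates 1.  Hence only
   j = s_1 contributes (the binomial vanishes for j > s_1 + 1), and that term is L_0
   times L_1^(n-s_1) L_{-s_2} ... L_{-s_r} 1, which is zero by induction on r, or L_0 1 = 0
   when r = 1.  The argument does not use the characteristic of F. *)
From HB Require Import structures.
From mathcomp Require Import all_boot all_order all_algebra.
From mathcomp Require Import zify ring.
Import GRing.Theory Num.Theory.
Set Implicit Arguments. Unset Strict Implicit.
Local Open Scope ring_scope.

Definition weight (w : seq int) : int := \sum_(m <- w) (- m).

Definition normal_word (w : seq int) : bool := all (fun m : int => m <= -2) w.

Definition vanishing_weight (d : int) : bool := (d < 0) || (d == 1).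

Lemma weight_nil : weight [::] = 0.
Proof. by rewrite /weight big_nil. Qed.

Lemma weight_cons m w : weight (m :: w) = - m + weight w.
Proof. by rewrite /weight big_cons. Qed.

Lemma weight_cat_cons v m w : weight (v ++ m :: w) = - m + weight (v ++ w).
Proof. by rewrite /weight !big_cat big_cons /=; ring. Qed.

Lemma normal_weight w : normal_word w -> weight w = 0 \/ 2 <= weight w.
Proof.
elim: w => [|m w IH]; first by rewrite weight_nil; left.
move=> /andP [hm /IH hw]; right; rewrite weight_cons; case: hw; lia.
Qed.

Lemma normal_weight_eq0 w : normal_word w -> weight w = 0 -> w = [::].
Proof.
case: w => // m w /andP [hm /normal_weight hw]; rewrite weight_cons; case: hw; lia.
Qed.

Lemma normal_weightNvanishing w : normal_word w -> ~~ vanishing_weight (weight w).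
Proof. by move/normal_weight; rewrite /vanishing_weight; case; lia. Qed.

Section FormalSums.
Variable F : fieldType.
Implicit Types (x y : fsum F) (a : F) (u v w : seq int).

Definition fscale a x : fsum F := [seq (a * q.1, q.2) | q <- x].

Definition fprefix (k : int) x : fsum F := [seq (q.1, k :: q.2) | q <- x].

Lemma fcoef_nil w : fcoef ([::] : fsum F) w = 0.
Proof. by rewrite /fcoef big_nil. Qed.

Lemma fcoef_cons (q : F * seq int) x w :
  fcoef (q :: x) w = (q.2 == w)%:R * q.1 + fcoef x w.
Proof. by rewrite /fcoef big_cons; case: eqP; rewrite ?mul1r ?mul0r ?add0r. Qed.

Lemma fcoef_cat x y w : fcoef (x ++ y) w = fcoef x w + fcoef y w.
Proof. by rewrite /fcoef big_cat. Qed.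

Lemma fcoef_fscale a x w : fcoef (fscale a x) w = a * fcoef x w.
Proof.
elim: x => [|q x IH]; first by rewrite /= !fcoef_nil mulr0.
by rewrite /= !fcoef_cons IH /=; ring.
Qed.

Lemma fcoef_fprefix k x w :
  fcoef (fprefix k x) w = if w is k' :: w' then (k' == k)%:R * fcoef x w' else 0.
Proof.
elim: x => [|q x IH]; first by case: w => [|k' w']; rewrite /= !fcoef_nil ?mulr0.
rewrite /= !fcoef_cons {}IH; case: w => [|k' w'] /=; first by rewrite mul0r add0r.
by rewrite fcoef_cons eqseq_cons eq_sym; case: eqP => _ /=; ring.
Qed.

Variable c : F.

Lemma eq_inJ x y : fcoef x =1 fcoef y -> inJ c y -> inJ c x.
Proof. by move=> exy [gs [gen_gs ey]]; exists gs; split=> // w; rewrite exy. Qed.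

Lemma inJ0 : inJ c [::].
Proof. by exists [::]; split=> // w; rewrite fcoef_nil big_nil. Qed.

Lemma inJ_gen x : is_gen c x -> inJ c x.
Proof.
move=> gen_x; exists [:: (1, x)]; split; first by move=> g; rewrite inE => /eqP ->.
by move=> w; rewrite big_seq1 mul1r.
Qed.

Lemma inJ_cat x y : inJ c x -> inJ c y -> inJ c (x ++ y).
Proof.
move=> [gx [gen_gx ex]] [gy [gen_gy ey]]; exists (gx ++ gy); split.
  by move=> g; rewrite mem_cat => /orP [/gen_gx|/gen_gy].
by move=> w; rewrite fcoef_cat big_cat ex ey.
Qed.

Lemma inJ_fscale a x : inJ c x -> inJ c (fscale a x).
Proof.
move=> [gs [gen_gs ex]]; exists [seq (a * g.1, g.2) | g <- gs]; split.
  by move=> _ /mapP [g /gen_gs gen_g ->].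
by move=> w; rewrite fcoef_fscale ex big_map mulr_sumr; apply: eq_bigr => g _; rewrite mulrA.
Qed.

Lemma is_gen_fprefix k x : is_gen c x -> is_gen c (fprefix k x).
Proof.
case=> [[u [m [n [w ->]]]]|[u [m [hm ->]]]].
  by left; exists (k :: u), m, n, w.
by right; exists (k :: u), m.
Qed.

Lemma inJ_fprefix k x : inJ c x -> inJ c (fprefix k x).
Proof.
move=> [gs [gen_gs ex]]; exists [seq (g.1, fprefix k g.2) | g <- gs]; split.
  by move=> _ /mapP [g /gen_gs gen_g ->]; exact: is_gen_fprefix.
move=> w; rewrite fcoef_fprefix big_map.
under eq_bigr => g _ do rewrite fcoef_fprefix.
case: w => [|k' w']; first by rewrite big1 // => g _; rewrite mulr0.
by rewrite ex mulr_sumr; apply: eq_bigr => g _; rewrite mulrCA.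
Qed.

Lemma inJ_cons a u x : inJ c [:: (1, u)] -> inJ c x -> inJ c ((a, u) :: x).
Proof.
move=> /(inJ_fscale a) Ju Jx; apply: eq_inJ (inJ_cat Ju Jx) => w.
by rewrite /= !fcoef_cons /= mulr1.
Qed.

Lemma inJ_coef0 x : (forall q, q \in x -> q.1 = 0) -> inJ c x.
Proof.
elim: x => [|q x IH] x0; first exact: inJ0.
apply: eq_inJ (IH _) => [w|q' xq']; last by apply: x0; rewrite inE xq' orbT.
by rewrite fcoef_cons x0 ?mem_head // mulr0 add0r.
Qed.

Lemma inJ_flatten (T : eqType) (f : T -> fsum F) s :
  (forall j, j \in s -> inJ c (f j)) -> inJ c (flatten [seq f j | j <- s]).
Proof.
elim: s => [|j s IH] Jf /=; first exact: inJ0.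
apply: inJ_cat; first by apply: Jf; rewrite mem_head.
by apply: IH => j' sj'; apply: Jf; rewrite inE sj' orbT.
Qed.

Lemma inJ_lmul a k x : inJ c x -> inJ c [seq (a * q.1, k :: q.2) | q <- x].
Proof. by move=> /(inJ_fscale a) /(inJ_fprefix k); rewrite /fprefix /fscale -map_comp. Qed.

(* v L_a L_b t = v L_b L_a t + (a - b) v L_{a+b} t + (central term) v t: the first word
   has L_a one step further right, the others are shorter, and all have the same weight. *)
Lemma inJ_word_shift n :
  (forall u, (size u <= n)%N -> vanishing_weight (weight u) -> inJ c [:: (1, u)]) ->
  forall t v (a : int), -1 <= a -> (size (v ++ a :: t) <= n.+1)%N ->
    vanishing_weight (weight (v ++ a :: t)) -> inJ c [:: (1, v ++ a :: t)].
Proof.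
move=> IHn; elim=> [|b t IHt] v a ha hs hw.
  by apply: inJ_gen; right; exists v, a; rewrite cats1.
have ew : weight (v ++ a :: b :: t) = - a - b + weight (v ++ t).
  by rewrite !weight_cat_cons; ring.
set k := 2%:R^-1 * binomz F (a + 1) 3 * (a + b == 0)%:R * c.
have Jswap : inJ c [:: (1, v ++ b :: a :: t)].
  rewrite -cat_rcons; apply: IHt; rewrite // cat_rcons.
    by move: hs; rewrite !size_cat.
  by move: hw; rewrite !weight_cat_cons addrCA.
have Jmerge : inJ c [:: (1, v ++ (a + b) :: t)].
  apply: IHn; first by move: hs; rewrite !size_cat /=; lia.
  by rewrite weight_cat_cons opprD -ew.
have Jcentral : inJ c [:: (k, v ++ t)].
  have [eab|nab] := eqVneq (a + b) 0.
    apply: inJ_cons inJ0; apply: IHn; first by move: hs; rewrite !size_cat /=; lia.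
    by move: hw; rewrite ew -opprD eab oppr0 add0r.
  by apply: inJ_coef0 => q; rewrite inE => /eqP -> /=; rewrite /k (negbTE nab) mulr0 mul0r.
have Jrel : inJ c (comm_rel c v a b t) by apply: inJ_gen; left; exists v, a, b, t.
apply: eq_inJ (inJ_cat Jrel (inJ_cons 1 Jswap (inJ_cons ((a - b)%:~R) Jmerge Jcentral))).
by move=> w; rewrite /comm_rel /= !fcoef_cons fcoef_nil /= -/k; ring.
Qed.

Lemma inJ_word_vanishing u : vanishing_weight (weight u) -> inJ c [:: (1, u)].
Proof.
elim: (size u) {-2}u (leqnn (size u)) => [|n IHn] {}u hs hw.
  by move: hs hw; rewrite leqn0 => /nilP ->; rewrite weight_nil.
have /allPn [a ua ha] : ~~ normal_word u.
  by apply: contraL hw => /normal_weightNvanishing.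
case/splitPr: ua hs hw => v t hs hw; apply: inJ_word_shift IHn _ _ _ _ hs hw; lia.
Qed.

Lemma inJ_vanishing_weight x :
  (forall q, q \in x -> vanishing_weight (weight q.2)) -> inJ c x.
Proof.
elim: x => [|[a u] x IH] hx; first exact: inJ0.
apply: inJ_cons; first exact: inJ_word_vanishing (hx _ (mem_head _ _)).
by apply: IH => q xq; apply: hx; rewrite inE xq orbT.
Qed.

Lemma actw_weight r w q : q \in actw F r w -> weight q.2 = weight w - r%:Z.
Proof.
elim: w r q => [|m w IH] r q.
  by case: r => [|r] //=; rewrite inE => /eqP -> /=; rewrite subr0.
case/flatten_mapP => j; rewrite mem_iota => /andP [_ hj] /mapP [q' /IH wq' ->] /=.
by rewrite !weight_cons wq'; lia.
Qed.

Lemma inJ_actw_vanishing r w : vanishing_weight (weight w - r%:Z) -> inJ c (actw F r w).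
Proof. by move=> hw; apply: inJ_vanishing_weight => q /actw_weight ->. Qed.

Lemma inJ_actw w r : normal_word w -> weight w = r%:Z -> (1 <= r)%N -> inJ c (actw F r w).
Proof.
elim: w r => [|m w IH] r; first by rewrite weight_nil; lia.
move=> /andP [hm nw]; rewrite weight_cons => hr _.
have [d wd] : exists d : nat, weight w = d%:Z.
  by case: (normal_weight nw) => h; [exists 0%N | exists `|weight w|%N]; lia.
have [s ms] : exists s : nat, m = - s%:Z by exists `|m|%N; lia.
have r_sd : r = (s + d)%N by move: hr; rewrite wd ms; lia.
apply: inJ_flatten => j; rewrite mem_iota add0n => /andP [_ hj].
have [ejs|njs] := eqVneq j s; last first.
  have [le_js1|gt_js1] := leqP j s.+1.
    by apply/inJ_lmul/inJ_actw_vanishing; rewrite wd /vanishing_weight; lia.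
  apply: inJ_coef0 => _ /mapP [q _ ->] /=.
  by rewrite (_ : 1 - m = s.+1%:Z) /= ?bin_small ?mul0r //; lia.
subst j; have [d0|d_gt0] := eqVneq d 0%N.
  move: wd; rewrite d0 => /(normal_weight_eq0 nw) ->.
  rewrite (_ : (r - s)%N = 0%N) /=; last by lia.
  apply: inJ_cons inJ0; rewrite (_ : m + s%:Z = 0); last by lia.
  by apply: inJ_gen; right; exists [::], 0.
by apply/inJ_lmul/IH; rewrite // ?wd; lia.
Qed.

End FormalSums.

Theorem lemma5p6 (F : closedFieldType) (p : nat) (hp : prime p) (hodd : odd p)
  (hchar : p \in [pchar F]) (c : F) (n : nat) (hn : (1 <= n)%N) (x : fsum F) :
  in_Vn n x -> inJ c (L1div n x).
Proof.
move=> Vx; apply: inJ_flatten => pr xpr.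
have [nw wn] := Vx pr xpr.
exact: inJ_fscale (inJ_actw c nw wn hn).
Qed.
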